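(* Let $\ell\ge2$, $n\ge1$ and $N=\lfloor n/\ell\rfloor$. Let $\tilde e_j$ ($0\le j\le\ell-1$) be the Misra–Miwa Kashiwara operators on partitions and $\varepsilon_j(\mu)=\max\{k\ge0:\tilde e_j^{\,k}\mu\neq0\}$. (1) If $n\not\equiv0\pmod\ell$, then for $0\le i\le N$: $\tilde e_j(\mu_i^{(n)})=0$ if $j\not\equiv n-1\pmod\ell$, and $\tilde e_j(\mu_i^{(n)})=\mu_i^{(n-1)}$ if $j\equiv n-1\pmod\ell$. (2) If $n\equiv0\pmod\ell$, then for $1\le i\le N$: $\tilde e_j(\mu_i^{(n)})=0$ if $j\not\equiv n-1$, and $\tilde e_j(\mu_i^{(n)})=\mu_{i-1}^{(n-1)}$ if $j\equiv n-1\pmod\ell$; and $\tilde e_j(\mu_0^{(n)})=0$ for all $0\le j\le\ell-1$. (3) For $1\le i\le N$, $\varepsilon_j(\mu_i^{(n)})=1$ if $j\equiv n-1\pmod\ell$ and $0$ otherwise; and $\varepsilon_j(\mu_0^{(n)})=1$ if $j\equiv n-1\pmod\ell$ and $n\not\equiv0\pmod\ell$, and $0$ otherwise.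
   Context: Partitions $\mu_i^{(k)}$ for $k\ge1$, $N_k=\lfloor k/\ell\rfloor$: $\mu_0^{(k)}=(k)$; for $1\le i\le N_k$, with $a=(\ell-1)+(N_k-i)\ell$, $m=k-a=b(\ell-1)+c$, $0\le c<\ell-1$, $\mu_i^{(k)}=(a,(\ell-1)^b,c)$ (omit $c$ if $0$). The box in row $a$, column $b$ of a Young diagram has $\ell$-residue $b-a\bmod\ell$. A box is removable (resp. addable) for $\lambda$ if removing it from (resp. adding it to) $\lambda$ gives a partition; it is $i$-removable/$i$-addable if its residue is $i$. Reading the $i$-addable and $i$-removable boxes of $\lambda$ from the bottom row up gives a word in $A$ (addable) and $R$ (removable); delete occurrences of $AR$ repeatedly until none remain. If an $R$ remains, the $i$-good box is the removable box corresponding to the rightmost remaining $R$, and $\tilde e_i\lambda=\lambda$ minus that box; otherwise $\tilde e_i\lambda=0$. *)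

From mathcomp Require Import all_boot.
Set Implicit Arguments. Unset Strict Implicit. Unset Printing Implicit Defensive.

(* Partitions are represented as weakly decreasing sequences of positive
   naturals [lambda_1; lambda_2; ...]; the empty partition is [::].
   Rows and columns are numbered from 1. *)

(* l-residue of the box in row r, column c : (c - r) mod l *)
Definition residue (l r c : nat) : nat := (c + l * r - r) %% l.

Definition mu (l k i : nat) : seq nat :=
  if i == 0 then (if k == 0 then [::] else [:: k])
  else
    let a := (l - 1) + (k %/ l - i) * l in
    let m := k - a in
    let b := m %/ (l - 1) in
    let c := m %% (l - 1) in
    a :: nseq b (l - 1) ++ (if c == 0 then [::] else [:: c]).

(* Letters: (true, r) = R (removable box in row r), (false, r) = A
   (addable box in row r). *)

Definition rem_letter (l i : nat) (lam : seq nat) (r : nat) : seq (bool * nat) :=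
  if (r <= size lam) && (nth 0 lam r < nth 0 lam r.-1)
     && (residue l r (nth 0 lam r.-1) == i)
  then [:: (true, r)] else [::].

Definition add_letter (l i : nat) (lam : seq nat) (r : nat) : seq (bool * nat) :=
  if (0 < r) && (r <= (size lam).+1)
     && ((r == 1) || (nth 0 lam r.-1 < nth 0 lam r.-2))
     && (residue l r (nth 0 lam r.-1).+1 == i)
  then [:: (false, r)] else [::].

Definition signature (l i : nat) (lam : seq nat) : seq (bool * nat) :=
  flatten [seq add_letter l i lam r ++ rem_letter l i lam r
          | r <- rev (iota 1 (size lam).+1)].

Fixpoint del_AR (w : seq (bool * nat)) : seq (bool * nat) :=
  match w with
  | [::] => [::]
  | x :: t =>
      match x, t with
      | (false, _), (true, _) :: t' => t'
      | _, _ => x :: del_AR t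
      end
  end.

Definition reduce_word (w : seq (bool * nat)) : seq (bool * nat) :=
  iter (size w) del_AR w.

Definition good_row (l i : nat) (lam : seq nat) : option nat :=
  let rs := [seq p.2 | p <- reduce_word (signature l i lam) & p.1] in
  if rs is [::] then None else Some (last 0 rs).

Definition remove_box (lam : seq nat) (r : nat) : seq nat :=
  [seq x <- set_nth 0 lam r.-1 (nth 0 lam r.-1).-1 | x != 0].

(* Kashiwara operator e~_i ; None stands for 0 *)
Definition e_tilde (l i : nat) (lam : seq nat) : option (seq nat) :=
  match good_row l i lam with
  | None => None
  | Some r => Some (remove_box lam r)
  end.

Definition e_iter (l i k : nat) (lam : seq nat) : option (seq nat) :=
  iter k (fun o => obind (e_tilde l i) o) (Some lam).

(* epsilon_i(lam) = max {k >= 0 : e~_i^k lam <> 0}; since each application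
   removes a box, k ranges over 0 .. |lam|. *)
Definition eps (l i : nat) (lam : seq nat) : nat :=
  \max_(k < (sumn lam).+1 | e_iter l i k lam != None) k.

(* Write l = d + 1. For i >= 1, mu_i^(n) = (a, d^b, c) with a = d + q l, so every row but the
   tail c < d has length -1 mod l, and the removable box ending such a row r has residue -1 - r.
   Reading the j-signature from the bottom, each of these boxes other than the last box of the
   diagram is cancelled by a lower addable box of the same residue: the one ending row 2 (for
   row 1, when b > 0) or the one in column 1 below the tail (for row b + 1, when c > 0). So the
   good box is the last box of the diagram, of residue a + b d + c - 1 = n - 1 mod l, and removing
   it gives mu_i^(n-1), or mu_(i-1)^(n-1) when l | n. For mu_0^(n) = (n), the box of residue n - 1
   is cancelled by the addable box of row 2 (residue -1) exactly when l | n. The partition obtained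
   has last box of residue n - 2, so e_j kills it and epsilon_j <= 1. *)

From mathcomp Require Import all_boot zify.

Set Implicit Arguments.
Unset Strict Implicit.
Unset Printing Implicit Defensive.

(* Congruences are passed as equalities with explicit multiples of [l], so that every side
   condition is linear. *)
Lemma eq_modn_addM l x y p p' : x + p * l = y + p' * l -> x = y %[mod l].
Proof. by move=> E; rewrite -(modnMDl p x) -(modnMDl p' y) !(addnC (_ * l)) E. Qed.

Lemma residue_eq l r c r' c' p p' :
  0 < l -> c + r' + p * l = c' + r + p' * l -> residue l r c = residue l r' c'.
Proof.
move=> l_gt0 E; apply: (@eq_modn_addM _ _ _ (p + r') (p' + r)).
have r_le : r <= l * r by rewrite leq_pmull.
have r'_le : r' <= l * r' by rewrite leq_pmull.
nia.
Qed.

Lemma residue_val l r c v p p' :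
  v < l -> c + p * l = v + r + p' * l -> residue l r c = v.
Proof.
move=> v_lt E; rewrite -[RHS](modn_small v_lt).
apply: (@eq_modn_addM _ _ _ p (p' + r)).
have r_le : r <= l * r by rewrite leq_pmull //; lia.
nia.
Qed.

Lemma residue_shift_neq l r c k : 0 < k < l -> residue l r (c + k) != residue l r c.
Proof.
move=> /andP[k_gt0 k_lt]; rewrite /residue.
have r_le : r <= l * r by rewrite leq_pmull //; lia.
rewrite (_ : c + k + l * r - r = c + l * r - r + k); last lia.
by rewrite -[X in _ != X %% l]addn0 eqn_modDl mod0n modn_small //; lia.
Qed.

Lemma residue_neq l r c r' c' k p p' :
  0 < k < l -> c + r' + k + p * l = c' + r + p' * l -> residue l r c != residue l r' c'.
Proof.
move=> k_bounds E.
have -> : residue l r' c' = residue l r (c + k).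
  by apply: (@residue_eq _ _ _ _ _ p' p); case/andP: k_bounds; lia.
by rewrite eq_sym residue_shift_neq.
Qed.

Lemma residue_row1 l c : residue l 1 c.+1 = c %% l.
Proof. by rewrite /residue muln1 addSn subn1 /= modnDr. Qed.

Lemma modnS_neq l m : 1 < l -> m.+1 %% l != m %% l.
Proof. by move=> l_gt1; rewrite -!residue_row1 -(addn1 m.+1) residue_shift_neq ?l_gt1. Qed.

Lemma rev_iota1_split b s :
  rev (iota 1 (b + s).+3) = rev (iota b.+3 s.+1) ++ rev (iota 3 b) ++ [:: 2; 1].
Proof.
have -> : (b + s).+3 = 2 + (b + s.+1) by lia.
by rewrite !iotaD !rev_cat /= catA (_ : 3 + b = b.+3).
Qed.

Lemma flatten_map_nil (T : eqType) U (f : T -> seq U) s :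
  {in s, forall x, f x = [::]} -> flatten (map f s) = [::].
Proof. by move=> f0; rewrite (eq_in_map f (fun=> [::]) s).1 //; elim: s {f0}. Qed.

Lemma nth_cons_nseq_cat x y n t k :
  nth 0 (x :: nseq n y ++ t) k.+1 = if k < n then y else nth 0 t (k - n).
Proof. by rewrite /= nth_cat size_nseq nth_nseq; case: ifP => // ->. Qed.

Lemma remove_box_last x s y : x != 0 ->
  remove_box (x :: s ++ [:: y]) (size (x :: s ++ [:: y])) =
  x :: [seq z <- s | z != 0] ++ (if y.-1 == 0 then [::] else [:: y.-1]).
Proof.
move=> x_neq0; have nth_last : nth 0 (s ++ [:: y]) (size s) = y by rewrite nth_cat ltnn subnn.
have set_last z : set_nth 0 (s ++ [:: y]) (size s) z = s ++ [:: z].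
  by elim: s {nth_last} => //= ? ? ->.
rewrite /remove_box /= size_cat addn1 /= nth_last set_last /= x_neq0 filter_cat /=.
by case: eqP.
Qed.

Lemma e_tilde_nil l j : e_tilde l j [::] = None.
Proof. by rewrite /e_tilde /good_row /signature /= /add_letter /rem_letter /=; case: (_ == j). Qed.

Lemma e_iter_None l j m k lam : m <= k -> e_iter l j m lam = None -> e_iter l j k lam = None.
Proof.
move=> /subnKC <- Em; elim: (k - m) => [|k' IHk]; first by rewrite addn0.
by rewrite addnS /e_iter iterS -/(e_iter _ _ _ _) IHk.
Qed.

Lemma eps_eq0 l j lam : e_tilde l j lam = None -> eps l j lam = 0.
Proof.
move=> E; have E1 : e_iter l j 1 lam = None by rewrite /e_iter /= E.
apply/eqP; rewrite -leqn0; apply/bigmax_leqP => -[[|k] k_lt] // /negP[].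
by apply/eqP; apply: e_iter_None E1.
Qed.

Lemma eps_eq1 l j lam lam' : e_tilde l j lam = Some lam' -> e_tilde l j lam' = None ->
  0 < sumn lam -> eps l j lam = 1.
Proof.
move=> E1 E2 sumn_gt0.
have E2' : e_iter l j 2 lam = None by rewrite /e_iter /= E1 /= E2.
apply/eqP; rewrite eqn_leq; apply/andP; split.
  apply/bigmax_leqP => -[[|[|k]] k_lt] // /negP[].
  by apply/eqP; apply: e_iter_None E2'.
have one_lt : 1 < (sumn lam).+1 by [].
apply: (@leq_bigmax_cond _ _ (fun k : 'I_(sumn lam).+1 => val k) (Ordinal one_lt)).
by rewrite /e_iter /= E1.
Qed.

Definition greedy_parts (d m : nat) : seq nat :=
  nseq (m %/ d) d ++ (if m %% d == 0 then [::] else [:: m %% d]).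

Lemma greedy_partsE d b c :
  c < d -> greedy_parts d (b * d + c) = nseq b d ++ (if c == 0 then [::] else [:: c]).
Proof.
by move=> c_lt; rewrite /greedy_parts divnMDl ?modnMDl ?divn_small ?modn_small ?addn0 //; lia.
Qed.

(* Case on which letters of a signature have residue [j] and compute the reduced word; the
   inconsistent cases are refuted by the residue (in)equalities in the context. *)
Ltac solve_word j :=
  rewrite [j == _]eq_sym;
  repeat match goal with |- context [?x == j] => case: (eqVneq x j) => ? end;
  rewrite /reduce_word /=; try congruence; lia.

Ltac decide_ltn :=
  repeat match goal with
  | |- context [?x < ?y] =>
      first [rewrite (_ : x < y = true); last lia | rewrite (_ : x < y = false); last lia]
  end.

(* The shapes (a, d^b, c) of mu_i^(n), i >= 1: the arm is the first row, of length a = -1 mod l,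
   the legs are the b rows of length d = l - 1 and the tail is the last row, of length c < d. *)
Section ArmAndLegs.
Variables d q : nat.
Hypothesis d_gt0 : 0 < d.
Local Notation l := d.+1.
Local Notation a := (d + q * d.+1).

Lemma residue_arm_addable : residue l 1 a.+1 = d.
Proof. apply: (@residue_val _ _ _ _ 0 q); lia. Qed.

Lemma residue_arm_removable : residue l 1 a = d.-1.
Proof. apply: (@residue_val _ _ _ _ 0 q); lia. Qed.

Lemma residue_leg_addable : residue l 2 l = d.-1.
Proof. apply: (@residue_val _ _ _ _ 0 0); lia. Qed.

Lemma residue_row3_addable : residue l 3 1 = d.-1.
Proof. apply: (@residue_val _ _ _ _ 1 0); lia. Qed.

Lemma good_row_arm_tail j c : 0 < c < d ->
  good_row l j [:: a; c] = if j == residue l 2 c then Some 2 else None.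
Proof.
case/andP=> c_gt0 c_lt.
rewrite /good_row /signature /= /add_letter /rem_letter /= c_gt0.
rewrite (_ : c < a) /=; last lia.
rewrite residue_arm_addable residue_arm_removable residue_row3_addable.
have ne1 : residue l 2 c <> residue l 2 c.+1.
  by apply/eqP; rewrite eq_sym -(addn1 c) residue_shift_neq //; lia.
have ne2 : residue l 2 c <> d.-1.
  apply/eqP; rewrite -residue_row3_addable.
  by apply: (@residue_neq _ _ _ _ _ (d.+1 - c) 0 1); lia.
solve_word j.
Qed.

Lemma good_row_arm_leg j :
  good_row l j [:: a; d] = if j == residue l 2 d then Some 2 else None.
Proof.
rewrite /good_row /signature /= /add_letter /rem_letter /= d_gt0.
rewrite residue_arm_addable residue_arm_removable residue_leg_addable residue_row3_addable.
have ne : residue l 2 d <> d.-1.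
  apply/eqP; rewrite -residue_leg_addable.
  by apply: (@residue_neq _ _ _ _ _ 1 0 0); lia.
case: (d < a); solve_word j.
Qed.

Lemma good_row_arm_leg_tail j c : 0 < c < d ->
  good_row l j [:: a; d; c] = if j == residue l 3 c then Some 3 else None.
Proof.
case/andP=> c_gt0 c_lt.
rewrite /good_row /signature /= /add_letter /rem_letter /= c_gt0 c_lt.
rewrite residue_arm_addable residue_arm_removable residue_leg_addable.
have -> : residue l 2 d = residue l 4 1.
  by apply: (@residue_eq _ _ _ _ _ 0 1); lia.
have ne1 : residue l 3 c <> residue l 3 c.+1.
  by apply/eqP; rewrite eq_sym -(addn1 c) residue_shift_neq //; lia.
have ne2 : residue l 4 1 <> residue l 3 c.
  by apply/eqP; apply: (@residue_neq _ _ _ _ _ c 0 0); lia.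
case: (d < a); solve_word j.
Qed.

Lemma signature_arm_legs j b t (lam := a :: nseq b.+2 d ++ t) :
  signature l j lam =
  flatten [seq add_letter l j lam r ++ rem_letter l j lam r | r <- rev (iota b.+3 (size t).+2)]
  ++ add_letter l j lam 2 ++ rem_letter l j lam 2 ++ add_letter l j lam 1 ++ rem_letter l j lam 1.
Proof.
rewrite /signature (_ : (size lam).+1 = (b + (size t).+1).+3); last first.
  by rewrite /lam /= size_cat size_nseq; lia.
rewrite rev_iota1_split map_cat flatten_cat map_cat flatten_cat.
rewrite [flatten (map _ (rev (iota 3 b)))]flatten_map_nil /=.
  by rewrite !cats0 !catA.
move=> r.
rewrite mem_rev mem_iota => /andP[r_ge r_lt].
rewrite /add_letter /rem_letter.
have [r1 r2 r3] : [/\ nth 0 lam r.-2 = d, nth 0 lam r.-1 = d & nth 0 lam r = d].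
  have -> : r = (r - 3).+3 by lia.
  by rewrite /lam !nth_cons_nseq_cat; split; rewrite ifT //; lia.
have -> : (r == 1) = false by lia.
by rewrite r1 r2 r3 ltnn !andbF.
Qed.

Lemma good_row_arm_legs_tail j b c : 0 < c < d ->
  good_row l j (a :: nseq b.+2 d ++ [:: c]) = if j == residue l b.+4 c then Some b.+4 else None.
Proof.
case/andP=> c_gt0 c_lt.
rewrite /good_row signature_arm_legs; set lam := a :: _.
have [len0 len1 len2] : [/\ nth 0 lam 0 = a, nth 0 lam 1 = d & nth 0 lam 2 = d] by [].
have [len_leg len_last_leg len_tail len_end] :
    [/\ nth 0 lam b.+1 = d, nth 0 lam b.+2 = d, nth 0 lam b.+3 = c & nth 0 lam b.+4 = 0].
  by rewrite /lam !nth_cons_nseq_cat; decide_ltn; rewrite ?subnn ?subSnn.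
have size_lam : size lam = b.+4 by rewrite /lam /= size_cat size_nseq addn1.
clearbody lam.
rewrite /add_letter /rem_letter /= size_lam len0 len1 len2 len_leg len_last_leg len_tail len_end.
rewrite ltnn c_gt0 c_lt residue_arm_addable residue_arm_removable residue_leg_addable.
decide_ltn.
have -> : residue l b.+3 d = residue l b.+1.+4 1.
  by apply: (@residue_eq _ _ _ _ _ 0 1); lia.
have ne1 : residue l b.+4 c <> residue l b.+4 c.+1.
  by apply/eqP; rewrite eq_sym -(addn1 c) residue_shift_neq //; lia.
have ne2 : residue l b.+1.+4 1 <> residue l b.+4 c.
  by apply/eqP; apply: (@residue_neq _ _ _ _ _ c 0 0); lia.
case: (d < a); solve_word j.
Qed.

Lemma good_row_arm_legs j b :
  good_row l j (a :: nseq b.+2 d ++ [::]) = if j == residue l b.+3 d then Some b.+3 else None.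
Proof.
rewrite /good_row signature_arm_legs; set lam := a :: _.
have [len0 len1 len2] : [/\ nth 0 lam 0 = a, nth 0 lam 1 = d & nth 0 lam 2 = d] by [].
have [len_leg len_last_leg len_end] :
    [/\ nth 0 lam b.+1 = d, nth 0 lam b.+2 = d & nth 0 lam b.+3 = 0].
  by rewrite /lam !nth_cons_nseq_cat; decide_ltn; rewrite ?subnn.
have size_lam : size lam = b.+3 by rewrite /lam /= cats0 size_nseq.
clearbody lam.
rewrite /add_letter /rem_letter /= size_lam len0 len1 len2 len_leg len_last_leg len_end.
rewrite ltnn d_gt0 residue_arm_addable residue_arm_removable residue_leg_addable.
decide_ltn.
have ne : residue l b.+3 d <> residue l b.+4 1.
  by apply/eqP; apply: (@residue_neq _ _ _ _ _ 1 0 1); lia.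
case: (d < a); solve_word j.
Qed.

Lemma good_row_arm_greedy_parts j m : 0 < m ->
  good_row l j (a :: greedy_parts d m) =
  if j == (a + m).-1 %% l then Some (size (a :: greedy_parts d m)) else None.
Proof.
move=> m_gt0; rewrite -residue_row1 prednK; last lia.
move: m_gt0; rewrite (divn_eq m d) greedy_partsE ?ltn_pmod //.
move: (m %/ d) (m %% d) (ltn_pmod m d_gt0) => b c c_lt m_gt0.
case: b m_gt0 => [|[|b]] m_gt0; case: eqP => [c0|/eqP c_gt0].
- lia.
- rewrite /= good_row_arm_tail; last lia.
  by congr (if j == _ then _ else _); apply: (@residue_eq _ _ _ _ _ q.+1 0); lia.
- rewrite c0 /= good_row_arm_leg.
  by congr (if j == _ then _ else _); apply: (@residue_eq _ _ _ _ _ q.+1 0); lia.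
- rewrite /= good_row_arm_leg_tail; last lia.
  by congr (if j == _ then _ else _); apply: (@residue_eq _ _ _ _ _ q.+2 0); lia.
- rewrite c0 good_row_arm_legs cats0 /= size_nseq.
  by congr (if j == _ then _ else _); apply: (@residue_eq _ _ _ _ _ (q + b).+2 0); lia.
- rewrite good_row_arm_legs_tail; last lia.
  rewrite /= size_cat size_nseq addn1.
  by congr (if j == _ then _ else _); apply: (@residue_eq _ _ _ _ _ (q + b).+3 0); lia.
Qed.

End ArmAndLegs.

Section MuPartitions.
Variable d : nat.
Hypothesis d_gt0 : 0 < d.
Local Notation l := d.+1.

Lemma good_row_single j n : 0 < n ->
  good_row l j [:: n] = if (j == n.-1 %% l) && ~~ (l %| n) then Some 1 else None.
Proof.
move=> n_gt0; rewrite /good_row /signature /= /add_letter /rem_letter /= n_gt0.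
rewrite residue_row1 -[in residue l 1 n](prednK n_gt0) residue_row1.
have -> : residue l 2 1 = d by apply: (@residue_val _ _ _ _ 1 0); lia.
have l_neq1 : l != 1 by rewrite eqSS -lt0n.
rewrite modn_pred // /dvdn.
have [->|n_mod_neq0] /= := eqVneq (n %% l) 0; first by solve_word j.
have n_mod_lt := ltn_pmod n (ltn0Sn d); rewrite -lt0n in n_mod_neq0; solve_word j.
Qed.

Lemma remove_box_greedy_parts x m : 0 < x -> 0 < m ->
  remove_box (x :: greedy_parts d m) (size (x :: greedy_parts d m)) = x :: greedy_parts d m.-1.
Proof.
move=> x_gt0; rewrite (divn_eq m d) greedy_partsE ?ltn_pmod //.
move: (m %/ d) (m %% d) (ltn_pmod m d_gt0) => b c c_lt.
have [->|c_gt0] := posnP c.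
- case: b => [|b] m_gt0; first lia.
  have -> : (b.+1 * d + 0).-1 = b * d + d.-1 by rewrite mulSn addn0 addnC; lia.
  rewrite greedy_partsE ?prednK // cats0 -(addn1 b) nseqD [nseq 1 d]/=.
  by rewrite remove_box_last -?lt0n // filter_nseq (_ : d != 0) ?mul1n // -lt0n.
- move=> m_gt0; have -> : (b * d + c).-1 = b * d + c.-1 by lia.
  rewrite greedy_partsE; last lia.
  by rewrite remove_box_last -?lt0n // filter_nseq (_ : d != 0) ?mul1n // -lt0n.
Qed.

Lemma muE k i : 0 < i ->
  mu l k i = (d + (k %/ l - i) * l) :: greedy_parts d (k - (d + (k %/ l - i) * l)).
Proof. by move=> i_gt0; rewrite /mu gtn_eqF // subn1. Qed.

Lemma mu_arm_lt n i : 0 < i <= n %/ l -> d + (n %/ l - i) * l < n.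
Proof.
case/andP=> i_gt0 i_le; have := divn_eq n l.
have [q ->] : exists q, n %/ l = q + i by exists (n %/ l - i); lia.
by rewrite addnK; nia.
Qed.

Lemma e_tilde_mu_pos n i j : 0 < i <= n %/ l ->
  e_tilde l j (mu l n i) = if j == n.-1 %% l then Some (mu l n.-1 (i - (l %| n))) else None.
Proof.
case/andP=> i_gt0 i_le.
have [q N_eq] : exists q, n %/ l = q + i by exists (n %/ l - i); lia.
have n_split := divn_eq n l; have n_mod_lt := ltn_pmod n (ltn0Sn d).
rewrite N_eq in n_split.
have a_lt : d + q * l < n by rewrite -(addnK i q) -N_eq mu_arm_lt ?i_gt0.
rewrite muE // N_eq addnK.
rewrite /e_tilde good_row_arm_greedy_parts ?subn_gt0 // subnKC; last lia.
case: (j == _) => //; congr Some.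
rewrite remove_box_greedy_parts ?subn_gt0 //; last lia.
have [i'_eq0|i'_gt0] := posnP (i - (l %| n)).
  have /andP[/eqP i_eq1 /eqP n_mod0] : (i == 1) && (n %% l == 0).
    by move: i'_eq0; rewrite /dvdn; case: (n %% l == 0) => /=; lia.
  rewrite i'_eq0 /mu (_ : (n - (d + q * l)).-1 = 0); last nia.
  rewrite /greedy_parts div0n mod0n (_ : n.-1 == 0 = false) /=; last lia.
  congr [:: _]; nia.
rewrite muE // divn_pred N_eq.
have -> : q + i - (l %| n) - (i - (l %| n)) = q by case: (l %| n) i'_gt0 => /=; lia.
by congr (_ :: greedy_parts d _); lia.
Qed.

Lemma e_tilde_mu0 n j : 0 < n ->
  e_tilde l j (mu l n 0) = if (j == n.-1 %% l) && ~~ (l %| n) then Some (mu l n.-1 0) else None.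
Proof.
move=> n_gt0; rewrite /mu /= gtn_eqF // /e_tilde good_row_single //.
by case: ifP => // _; rewrite /remove_box /=; case: (n.-1 == 0).
Qed.

Lemma e_tilde_mu n i j : 0 < n -> i <= n %/ l ->
  e_tilde l j (mu l n i) =
  if (j == n.-1 %% l) && ((0 < i) || ~~ (l %| n)) then Some (mu l n.-1 (i - (l %| n))) else None.
Proof.
move=> n_gt0 i_le; have [->|i_gt0] := posnP i; last by rewrite e_tilde_mu_pos ?i_gt0 ?andbT.
by rewrite e_tilde_mu0 //; case: (l %| n); rewrite ?andbF ?andbT.
Qed.

Lemma sumn_greedy_parts m : sumn (greedy_parts d m) = m.
Proof.
rewrite /greedy_parts sumn_cat sumn_nseq mulnC [RHS](divn_eq m d).
by case: eqP => [->|] /=; rewrite ?addn0.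
Qed.

Lemma sumn_mu k i : i <= k %/ l -> sumn (mu l k i) = k.
Proof.
move=> i_le; have [->|i_gt0] := posnP i.
  by rewrite /mu /=; case: (k =P 0) => [->|] //= _; rewrite addn0.
by rewrite muE //= sumn_greedy_parts subnKC // ltnW // mu_arm_lt ?i_gt0.
Qed.

Lemma eps_mu n i j : 0 < n -> i <= n %/ l ->
  eps l j (mu l n i) = (e_tilde l j (mu l n i) != None).
Proof.
move=> n_gt0 i_le; case E: (e_tilde l j (mu l n i)) => [lam|]; last exact: eps_eq0.
apply: (eps_eq1 E); last by rewrite sumn_mu.
move: E; rewrite e_tilde_mu //; case: ifP => // /andP[/eqP -> _] [<-].
have i'_le : i - (l %| n) <= n.-1 %/ l by rewrite divn_pred leq_sub2r.
have [n_eq1|n_gt1] := leqP n 1.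
  rewrite (_ : n.-1 = 0) ?div0n ?leqn0 in i'_le *; last lia.
  by rewrite (eqP i'_le); apply: e_tilde_nil.
rewrite e_tilde_mu //; last lia.
have l_gt1 : 1 < l by rewrite ltnS.
rewrite (_ : n.-1 = n.-2.+1) /=; last lia.
by rewrite (negbTE (modnS_neq _ l_gt1)).
Qed.

End MuPartitions.

Theorem lemma6p8 (l n : nat) (hl : 2 <= l) (hn : 1 <= n) :
  (* (1) *)
  (n %% l != 0 ->
     forall i, i <= n %/ l -> forall j, j < l ->
       e_tilde l j (mu l n i) =
         if j == (n - 1) %% l then Some (mu l (n - 1) i) else None) /\
  (* (2) *)
  (n %% l == 0 ->
     (forall i, 1 <= i <= n %/ l -> forall j, j < l ->
        e_tilde l j (mu l n i) =
          if j == (n - 1) %% l then Some (mu l (n - 1) (i - 1)) else None) /\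
     (forall j, j < l -> e_tilde l j (mu l n 0) = None)) /\
  (* (3) *)
  (forall i, 1 <= i <= n %/ l -> forall j, j < l ->
     eps l j (mu l n i) = if j == (n - 1) %% l then 1 else 0) /\
  (forall j, j < l ->
     eps l j (mu l n 0) =
       if (j == (n - 1) %% l) && (n %% l != 0) then 1 else 0).
Proof.
case: l hl => [|d] // d_gt0; rewrite subn1.
split; [|split; [|split]].
- move=> n_mod i i_le j _.
  by rewrite e_tilde_mu // /dvdn (negbTE n_mod) orbT andbT subn0.
- move=> n_mod; split=> [i /andP[i_gt0 i_le] j _ | j _]; rewrite e_tilde_mu // /dvdn n_mod.
    by rewrite i_gt0 andbT.
  by rewrite andbF.
- move=> i /andP[i_gt0 i_le] j _.
  by rewrite eps_mu // e_tilde_mu // i_gt0 andbT; case: (j == _).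
- move=> j _.
  by rewrite eps_mu // e_tilde_mu // /dvdn /=; case: (j == _); case: (n %% _ == 0).
Qed.
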